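(* Let $h(\cdot,\theta)=[h_1(\cdot,\theta),\dots,h_q(\cdot,\theta)]^T:\mathbb{R}^p\to\mathbb{R}^q$ be continuously differentiable in $x$ (for a fixed parameter $\theta$). For each $r\in\{1,\dots,q\}$ let $$b_r:=\sup_{x\in\mathbb{R}^p}\|\nabla_x h_r(x,\theta)\|_2,$$ and assume $0<b_r<\infty$. Fix $0<c<1$ and define $$\mathcal{B}_r:=\{x\in\mathbb{R}^p:\ \|\nabla_x h_r(x,\theta)\|_2>c\cdot b_r\},\qquad r\in\{1,\dots,q\}.$$ Suppose that $\mu\left(\bigcup_{r=1}^q\mathcal{B}_r\right)<C$ for some finite constant $C$, where $\mu$ is Lebesgue measure on $\mathbb{R}^p$. Then for every $\epsilon>0$ there exists a probability distribution $\mathcal{P}$ on $\mathbb{R}^p$ such that $$\sup_{x\in\mathbb{R}^p}\left\|\mathbb{E}_{\eta\sim\mathcal{P}}\,\nabla_x h_r(x+\eta,\theta)\right\|_2<(c+\epsilon)\cdot b_r\qquad\text{for all } r\in\{1,\dots,q\}.$$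
   Context: $h$ represents a single neural network layer with parameters $\theta$; $\nabla_x h_r(x,\theta)\in\mathbb{R}^p$ is the gradient of the $r$-th output coordinate with respect to the input $x$, and $\|\cdot\|_2$ is the Euclidean norm. The expectation is over a random perturbation $\eta$ of the input drawn from $\mathcal{P}$. *)

From HB Require Import structures.
From mathcomp Require Import all_boot all_order all_algebra.
From mathcomp Require Import all_classical all_reals all_analysis.
Set Implicit Arguments. Unset Strict Implicit. Unset Printing Implicit Defensive.
Import Order.TTheory GRing.Theory Num.Theory.
Import numFieldNormedType.Exports.
Local Open Scope classical_set_scope.
Local Open Scope ring_scope.

Section defs.
Variables (R : realType) (p : nat).

(* Euclidean norm on R^p (MathComp's own matrix norm is the max-norm). *)
Definition enorm (v : 'rV[R]_p) : R := Num.sqrt (\sum_(i < p) v 0 i ^+ 2).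

Definition grad (f : 'rV[R]_p -> R) (x : 'rV[R]_p) : 'rV[R]_p :=
  \row_(i < p) ('d f x) (delta_mx 0 i : 'rV[R]_p).

Definition box (a b : 'rV[R]_p) : set 'rV[R]_p :=
  [set x | forall i, a 0 i <= x 0 i <= b 0 i].

Definition box_vol (a b : 'rV[R]_p) : R :=
  \prod_(i < p) Num.max (b 0 i - a 0 i) 0.

Definition lebesgue_outer (A : set 'rV[R]_p) : \bar R :=
  ereal_inf [set s | exists a b : nat -> 'rV[R]_p,
     A `<=` \bigcup_k box (a k) (b k) /\
     s = (\sum_(k <oo) (box_vol (a k) (b k))%:E)%E].

(* R^p as a measurable space: p.-tuple R with the product (= Borel)
   sigma-algebra provided by MathComp-Analysis. *)
Definition tup2rv (t : p.-tuple R) : 'rV[R]_p := \row_(i < p) tnth t i.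

Definition expect_vec (P : probability (p.-tuple R) R)
    (g : 'rV[R]_p -> 'rV[R]_p) : 'rV[R]_p :=
  \row_(i < p) Rintegral P setT (fun t => g (tup2rv t) 0 i).

End defs.

(* Let eta be uniform on the cube [0, w]^p.  The set where the gradient of h_r
   exceeds c b_r is covered by countably many boxes of total volume below C, so
   for every x the probability that x + eta hits the cover is at most C / w^p,
   which is at most eps / 2 once w = 1 + 2 C / eps.  Bounding the norm of the
   gradient by c b_r off the cover and by b_r on it, and the norm of an
   expectation by the expectation of the norm, gives
   |E grad h_r(x + eta)| <= c b_r + b_r eps / 2 < (c + eps) b_r. *)

From HB Require Import structures.
From mathcomp Require Import all_boot all_order all_algebra.
From mathcomp Require Import all_classical all_reals all_analysis.
From mathcomp Require Import measurable_realfun lra ring.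
Import Order.TTheory GRing.Theory Num.Theory.
Import numFieldNormedType.Exports.
Local Open Scope classical_set_scope.
Local Open Scope ring_scope.
Set Implicit Arguments. Unset Strict Implicit. Unset Printing Implicit Defensive.

Section enorm.
Variables (R : realType) (n : nat).
Implicit Types u v : 'rV[R]_n.

Lemma enorm_ge0 v : 0 <= enorm v.
Proof. exact: sqrtr_ge0. Qed.

Lemma sqr_enorm v : enorm v ^+ 2 = \sum_i v 0 i ^+ 2.
Proof. by rewrite sqr_sqrtr // sumr_ge0 // => i _; exact: sqr_ge0. Qed.

Lemma enorm_gt0_dim v : 0 < enorm v -> (0 < n)%N.
Proof. by case: n v => // v; rewrite /enorm big_ord0 sqrtr0 ltxx. Qed.

Lemma coord_le_enorm v i : `|v 0 i| <= enorm v.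
Proof.
rewrite /enorm -sqrtr_sqr; apply: ler_wsqrtr.
by rewrite (bigD1 i) //= lerDl sumr_ge0 // => j _; exact: sqr_ge0.
Qed.

Lemma enorm_eq0 v : enorm v = 0 -> forall i, v 0 i = 0.
Proof.
move=> v0 i; apply/normr0_eq0/eqP.
by rewrite eq_le normr_ge0 andbT -v0 coord_le_enorm.
Qed.

Lemma dot_le_enorm u v : \sum_i u 0 i * v 0 i <= enorm u * enorm v.
Proof.
set a := enorm u; set b := enorm v.
have [a0|a_neq0] := eqVneq a 0.
  by rewrite a0 mul0r big1 // => i _; rewrite (enorm_eq0 a0) mul0r.
have [b0|b_neq0] := eqVneq b 0.
  by rewrite b0 mulr0 big1 // => i _; rewrite (enorm_eq0 b0) mulr0.
have ab_gt0 : 0 < a * b by rewrite mulr_gt0 // lt_def ?a_neq0 ?b_neq0 enorm_ge0.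
have : 0 <= \sum_i (b * u 0 i - a * v 0 i) ^+ 2.
  by apply: sumr_ge0 => i _; exact: sqr_ge0.
have -> : \sum_i (b * u 0 i - a * v 0 i) ^+ 2 =
    b ^+ 2 * \sum_i u 0 i ^+ 2 - 2 * (a * b) * \sum_i u 0 i * v 0 i +
    a ^+ 2 * \sum_i v 0 i ^+ 2.
  rewrite !mulr_sumr -sumrB -big_split /=.
  by apply: eq_bigr => i _; ring.
rewrite -!sqr_enorm -/a -/b.
nra.
Qed.

End enorm.

Section enorm_Rintegral.
Context d (T : measurableType d) (R : realType) (mu : {measure set T -> \bar R}).

Lemma Rintegral_sum (D : set T) (I : Type) (s : seq I) (f : I -> T -> R) :
  measurable D -> (forall i, mu.-integrable D (EFin \o f i)) ->
  \int[mu]_(x in D) (\sum_(i <- s) f i x) = \sum_(i <- s) \int[mu]_(x in D) f i x.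
Proof.
move=> mD intf; elim: s => [|i s IH].
  under eq_Rintegral do rewrite big_nil.
  by rewrite big_nil Rintegral_cst // mul0r.
under eq_Rintegral do rewrite big_cons; rewrite big_cons -IH RintegralD //.
apply: (eq_integrable _ (fun x => \sum_(j <- s) (f j x)%:E)) => //.
  by move=> x _; rewrite sumEFin.
by apply: (integrable_sum mD) => j _; exact: intf.
Qed.

Lemma enorm_Rintegral_le n (g : T -> 'rV[R]_n) (h : T -> R) :
  (forall i, mu.-integrable setT (EFin \o (fun t => g t 0 i))) ->
  mu.-integrable setT (EFin \o h) -> (forall t, enorm (g t) <= h t) ->
  enorm (\row_i \int[mu]_t g t 0 i) <= \int[mu]_t h t.
Proof.
move=> intg inth gh; set v := \row_i _; set N := enorm v.
have Ih_ge0 : 0 <= \int[mu]_t h t.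
  by apply: Rintegral_ge0 => t _; exact: le_trans (enorm_ge0 _) (gh t).
have [->//|N_neq0] := eqVneq N 0.
have N_gt0 : 0 < N by rewrite lt_def N_neq0 enorm_ge0.
suff : N ^+ 2 <= N * \int[mu]_t h t by rewrite expr2 ler_pM2l.
have intvg i : mu.-integrable setT (EFin \o (fun t => v 0 i * g t 0 i)).
  exact: (eq_integrable _ _ _ _ (integrableZl measurableT (v 0 i) (intg i))).
have -> : N ^+ 2 = \int[mu]_t \sum_i v 0 i * g t 0 i.
  rewrite sqr_enorm Rintegral_sum //; apply: eq_bigr => i _.
  by rewrite RintegralZl // expr2 {2}/v mxE.
rewrite -RintegralZl //; apply: le_Rintegral => //.
- apply: (eq_integrable _ (fun t => \sum_i (v 0 i * g t 0 i)%:E)) => //.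
    by move=> t _; rewrite sumEFin.
  by apply: (integrable_sum measurableT) => i _; exact: intvg.
- exact: (eq_integrable _ _ _ _ (integrableZl measurableT N inth)).
- move=> t _ /=; apply: le_trans (dot_le_enorm v (g t)) _.
  by rewrite ler_wpM2l ?enorm_ge0.
Qed.

End enorm_Rintegral.

Section uniform_cube.
Variables (R : realType) (w : R) (w_gt0 : 0 < w).

(* [uniform_prob] lives on a copy of R whose measurable structure is not the
   canonical one of R; restating it on [set R] lets it be a product factor. *)
Definition uniform_itv : set R -> \bar R := uniform_prob w_gt0.

Let uniform_itv0 : uniform_itv set0 = 0%E.
Proof. exact: measure0. Qed.

Let uniform_itv_ge0 A : (0 <= uniform_itv A)%E.
Proof. exact: measure_ge0. Qed.

Let uniform_itv_sigma_additive : semi_sigma_additive uniform_itv.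
Proof. exact: (@measure_semi_sigma_additive _ _ _ (uniform_prob w_gt0)). Qed.

HB.instance Definition _ := isMeasure.Build _ _ _ uniform_itv
  uniform_itv0 uniform_itv_ge0 uniform_itv_sigma_additive.

Let uniform_itv_setT : uniform_itv setT = 1%E.
Proof. exact: probability_setT. Qed.

HB.instance Definition _ :=
  Measure_isProbability.Build _ _ _ uniform_itv uniform_itv_setT.

Definition tuple_cons n (x : R * n.-tuple R) : n.+1.-tuple R :=
  [tuple of x.1 :: x.2].

Lemma measurable_tuple_cons n : measurable_fun setT (@tuple_cons n).
Proof. exact: measurable_cons. Qed.

HB.instance Definition _ n :=
  isMeasurableFun.Build _ _ _ _ (@tuple_cons n) (@measurable_tuple_cons n).

Fixpoint uniform_cube n : probability (n.-tuple R) R :=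
  match n with
  | 0 => dirac [tuple] : probability _ R
  | n.+1 => distribution (uniform_itv \x uniform_cube n)%E (@tuple_cons n)
  end.

End uniform_cube.

Section uniform_cube_box.
Variables (R : realType) (w : R) (w_gt0 : 0 < w).

Lemma box_vol_ge0 p (a b : 'rV[R]_p) : 0 <= box_vol a b.
Proof. by rewrite prodr_ge0 // => i _; rewrite le_max lexx orbT. Qed.

Lemma uniform_itv_le (a b : R) :
  (uniform_itv w_gt0 `[a, b] <= (Num.max (b - a) 0 / w)%:E)%E.
Proof.
rewrite /uniform_itv /uniform_prob.
apply: (@le_trans _ _ (\int[lebesgue_measure]_(x in `[a, b]) (w^-1)%:E)%E).
  apply: ge0_le_integral => //.
  - by move=> x _; rewrite lee_fin uniform_pdf_ge0.
  - by apply/measurable_EFinP/measurable_funTS; exact: measurable_uniform_pdf.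
  - move=> x _; rewrite /uniform_pdf lee_fin.
    by case: ifPn => _; rewrite ?subr0 // invr_ge0 ltW.
rewrite integral_cst //; have /= -> := lebesgue_measure_itv `[a, b].
rewrite lte_fin; case: ltP => [ab|ba].
  have ba_ge0 : 0 <= b - a by rewrite subr_ge0 ltW.
  by rewrite -EFinD -EFinM lee_fin (max_l ba_ge0) mulrC.
by rewrite -EFinM mulr0 lee_fin mulr_ge0 ?le_max ?lexx ?orbT // invr_ge0 ltW.
Qed.

Definition tbox n (a b : 'I_n -> R) : set (n.-tuple R) :=
  [set t | forall i, a i <= tnth t i <= b i].

Lemma measurable_tbox n (a b : 'I_n -> R) : measurable (tbox a b).
Proof.
have -> : tbox a b = \bigcap_(i in [set: 'I_n])
    ((fun t => tnth t i) @^-1` `[a i, b i]).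
  apply/seteqP; split => t /= tab i; first by move=> _ /=; rewrite in_itv /= tab.
  by have := tab i I; rewrite /= in_itv.
apply: fin_bigcap_measurable => [|i _]; first exact: finite_finset.
by rewrite -[X in measurable X]setTI; exact: measurable_tnth.
Qed.

Lemma uniform_cube_tbox n (a b : 'I_n -> R) :
  (uniform_cube w_gt0 n (tbox a b) <=
     (\prod_(i < n) (Num.max (b i - a i) 0 / w))%:E)%E.
Proof.
elim: n a b => [|n IH] a b.
  by rewrite big_ord0 probability_le1 //; exact: measurable_tbox.
rewrite big_ord_recl /=.
have -> : @tuple_cons R n @^-1` tbox a b =
    `[a ord0, b ord0] `*` tbox (a \o lift ord0) (b \o lift ord0).
  apply/seteqP; split => -[x t] /=.
    move=> xt; split; first by have := xt ord0; rewrite in_itv (tnth_nth x).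
    by move=> i; have := xt (lift ord0 i); rewrite tnthS.
  rewrite in_itv /= => -[x0 t0] i.
  case: (unliftP ord0 i) => [j ->|->]; last by rewrite (tnth_nth x).
  by rewrite tnthS; exact: t0.
rewrite product_measure1E //; last exact: measurable_tbox.
by rewrite EFinM; apply: lee_pmul => //; [exact: uniform_itv_le | exact: IH].
Qed.

Lemma box_shiftE p (a b x : 'rV[R]_p) :
  [set t | box a b (x + tup2rv t)] =
  tbox (fun i => a 0 i - x 0 i) (fun i => b 0 i - x 0 i).
Proof.
apply/seteqP; split => t /= abt i; have := abt i; rewrite !mxE;
  by rewrite !lerBlDl ?lerBrDl.
Qed.

Lemma measurable_box_shift p (a b x : 'rV[R]_p) :
  measurable [set t | box a b (x + tup2rv t)].
Proof. by rewrite box_shiftE; exact: measurable_tbox. Qed.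

Lemma uniform_cube_box_shift p (a b x : 'rV[R]_p) :
  (uniform_cube w_gt0 p [set t | box a b (x + tup2rv t)%R] <=
     (box_vol a b / w ^+ p)%:E)%E.
Proof.
rewrite box_shiftE; apply: le_trans; first exact: uniform_cube_tbox.
rewrite lee_fin prodf_div prodr_const card_ord.
by under eq_bigr do rewrite opprB addrA subrK.
Qed.

Lemma uniform_cube_cover p (a b : nat -> 'rV[R]_p) (x : 'rV[R]_p) :
  (uniform_cube w_gt0 p [set t | (\bigcup_k box (a k) (b k)) (x + tup2rv t)%R]
     <= (w ^+ p)^-1%:E * \sum_(k <oo) (box_vol (a k) (b k))%:E)%E.
Proof.
have mbox k := measurable_box_shift (a k) (b k) x.
have -> : [set t | (\bigcup_k box (a k) (b k)) (x + tup2rv t)] =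
    \bigcup_k [set t | box (a k) (b k) (x + tup2rv t)] by [].
apply: le_trans (measure_sigma_subadditive _ mbox (bigcupT_measurable _ mbox)
  (@subset_refl _ _)) _.
rewrite -nneseriesZl => [|k _]; last by rewrite lee_fin box_vol_ge0.
apply: lee_nneseries => [k _ _|k _]; first exact: measure_ge0.
by rewrite -EFinM mulrC; exact: uniform_cube_box_shift.
Qed.

End uniform_cube_box.

Section tup2rv_measurable.
Variables (R : realType) (p : nat).

Local Notation tup2rv := (@tup2rv R p).

Definition ratr_rV (q : 'rV[rat]_p) : 'rV[R]_p := map_mx ratr q.

Lemma rV_rat_dense (y : 'rV[R]_p) (e : R) : 0 < e ->
  exists q : 'rV[rat]_p, ball y e (ratr_rV q).
Proof.
move=> e_gt0.
have /fin_all_exists[q yq] (j : 'I_p) : exists r : rat, ball (y 0 j) e (ratr r).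
  have [r] := @rat_in_itvoo R (y 0 j - e) (y 0 j + e) ltac:(lra).
  by rewrite in_itv /= => yr; exists r; rewrite /ball /= ltr_distlC.
exists (\row_j q j); split => // i j; rewrite !mxE ord1; exact: yq.
Qed.

Lemma open_bigcup_rat_ball (O : set 'rV[R]_p) : open O ->
  O = \bigcup_(qe in [set qe : 'rV[rat]_p * rat |
                      ball (ratr_rV qe.1) (ratr qe.2) `<=` O])
        ball (ratr_rV qe.1) (ratr qe.2).
Proof.
move=> oO; apply/seteqP; split => [y Oy|y [qe /= qeO]]; last exact: qeO.
have /nbhs_ballP[d /= d_gt0 yO] := open_nbhs_nbhs (conj oO Oy).
have [r] := @rat_in_itvoo R 0 (d / 2) ltac:(lra).
rewrite in_itv /= => /andP[r_gt0 r_lt].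
have [q yq] := rV_rat_dense y r_gt0.
exists (q, r) => /=; last exact: ball_sym.
move=> z qz; apply: yO; apply: (@le_ball _ _ _ (ratr r + ratr r)); first lra.
exact: ball_triangle yq qz.
Qed.

Lemma measurable_tup2rv_ball (c : 'rV[R]_p) (e : R) :
  measurable (tup2rv @^-1` ball c e).
Proof.
have [e_gt0|e_le0] := ltP 0 e; last first.
  rewrite (_ : _ @^-1` _ = set0) // -subset0 => t [/= e_gt0 _]; lra.
have -> : tup2rv @^-1` ball c e =
    \bigcap_(j in [set: 'I_p]) ((fun t => tnth t j) @^-1` ball (c 0 j) e).
  apply/seteqP; split => t /=.
    by move=> [_ ct] j _ /=; have := ct 0 j; rewrite mxE.
  by move=> ct; split => // i j; rewrite ord1 mxE; exact: ct.
apply: fin_bigcap_measurable => [|j _]; first exact: finite_finset.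
rewrite -[X in measurable X]setTI.
by apply: measurable_tnth => //; exact: measurable_ball.
Qed.

Lemma measurable_tup2rv_open (O : set 'rV[R]_p) : open O ->
  measurable (tup2rv @^-1` O).
Proof.
move=> /open_bigcup_rat_ball ->; rewrite preimage_bigcup bigcup_mkcond.
apply: countable_bigcupT_measurable => // qe.
by case: ifP => _ //; exact: measurable_tup2rv_ball.
Qed.

Lemma continuous_measurable_tup2rv (F : 'rV[R]_p -> R) : continuous F ->
  measurable_fun setT (F \o tup2rv).
Proof.
move=> cF; apply: (measurability (@RGenInftyO.G R)).
  exact: RGenInftyO.measurableE.
move=> _ [_ [y ->] <-]; rewrite setTI comp_preimage.
apply: measurable_tup2rv_open; apply: open_comp => [x _|]; first exact: cF.
exact: itv_open_ends_open.
Qed.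

End tup2rv_measurable.

Lemma integrable_bounded d (T : measurableType d) (R : realType)
    (mu : {finite_measure set T -> \bar R}) (f : T -> R) (K : R) :
  measurable_fun setT f -> (forall t, `|f t| <= K) ->
  mu.-integrable setT (EFin \o f).
Proof.
move=> mf fK; apply: measurable_bounded_integrable => //.
  by rewrite ltey_eq fin_num_measure.
exists K; split; first exact: num_real.
by move=> M KM t _ /=; rewrite (le_trans (fK t)) // ltW.
Qed.

Section smoothed_gradient.
Variables (R : realType) (p : nat) (w : R) (w_gt0 : 0 < w).
Variables (G : 'rV[R]_p -> 'rV[R]_p) (beta c : R).
Hypotheses (G_cont : continuous G) (G_le : forall y, enorm (G y) <= beta)
  (c_ge0 : 0 <= c).
Variables (a b : nat -> 'rV[R]_p) (V : R).
Hypotheses (bad_cover : [set y | c * beta < enorm (G y)] `<=`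
                        \bigcup_k box (a k) (b k))
  (vol_le : (\sum_(k <oo) (box_vol (a k) (b k))%:E <= V%:E)%E).

Local Notation P := (uniform_cube w_gt0 p).

Lemma enorm_expect_shift_le (x : 'rV[R]_p) :
  enorm (expect_vec P (fun eta => G (x + eta))) <= c * beta + beta * (V / w ^+ p).
Proof.
have beta_ge0 : 0 <= beta := le_trans (enorm_ge0 _) (G_le 0).
pose A := [set t | (\bigcup_k box (a k) (b k)) (x + tup2rv t)].
have mA : measurable A.
  by apply: bigcupT_measurable => k; exact: measurable_box_shift.
have PA : fine (P A) <= V / w ^+ p.
  have : (P A <= (w ^+ p)^-1%:E * V%:E)%E.
    apply: le_trans (uniform_cube_cover w_gt0 a b x) _.
    by rewrite lee_wpmul2l // lee_fin invr_ge0 exprn_ge0 // ltW.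
  by rewrite -(fineK (fin_num_measure _ _ mA)) -EFinM lee_fin mulrC.
have intG i : P.-integrable setT (EFin \o (fun t => G (x + tup2rv t) 0 i)).
  apply: (integrable_bounded _ (K := beta)).
    have cGi : continuous (fun y => G (x + y) 0 i).
      move=> y.
      apply: (@continuous_comp _ _ _ (fun y => G (x + y)) (fun M => M 0 i)).
        apply: (@continuous_comp _ _ _ (fun y => x + y) G); last exact: G_cont.
        exact: (@cvgD _ _ _ (nbhs y) _ (fun=> x) id x y (cvg_cst x) cvg_id).
      exact: coord_continuous.
    exact: (continuous_measurable_tup2rv cGi).
  by move=> t; exact: le_trans (coord_le_enorm _ _) (G_le _).
have intA : P.-integrable setT (EFin \o (fun t => beta * \1_A t)).
  exact: (eq_integrable _ _ _ _
    (integrableZl measurableT beta (integrable_indic P mA))).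
apply: le_trans
  (enorm_Rintegral_le (h := fun t => c * beta + beta * \1_A t) _ _ _) _.
- exact: intG.
- exact: integrableD (finite_measure_integrable_cst _ _ _) intA.
- move=> t; rewrite indicE; case: (boolP (t \in A)) => [_|/negP tA].
    by rewrite mulr1 (le_trans (G_le _)) // lerDr mulr_ge0.
  rewrite mulr0 addr0 leNgt; apply/negP => bad; apply: tA; rewrite inE.
  exact: bad_cover.
rewrite RintegralD //; last exact: finite_measure_integrable_cst.
rewrite Rintegral_cst // [fine _](congr1 fine (probability_setT P)) mulr1.
rewrite lerD2l RintegralZl //.
  by rewrite /Rintegral integral_indic // setIT ler_wpM2l.
exact: integrable_indic.
Qed.

End smoothed_gradient.

Lemma cube_mass_le (R : realType) (n : nat) (C eps : R) : (0 < n)%N ->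
  0 < C -> 0 < eps -> C / (1 + 2 * C / eps) ^+ n <= eps / 2.
Proof.
move=> n_gt0 C_gt0 eps_gt0; set w := 1 + 2 * C / eps.
have w_ge1 : 1 <= w by rewrite lerDl divr_ge0 ?mulr_ge0 ?ltW.
have w_gt0 : 0 < w by lra.
apply: (@le_trans _ _ (C / w)).
  by rewrite ler_pM2l // lef_pV2 ?posrE ?exprn_gt0 // ler_eXnr.
rewrite ler_pdivrMr //.
have -> : eps / 2 * w = eps / 2 + C by rewrite /w; field; rewrite gt_eqF.
lra.
Qed.

Theorem theorem4p1 (R : realType) (p q : nat) (Theta : Type)
    (h : 'rV[R]_p -> Theta -> 'rV[R]_q) (theta : Theta)
    (hdiff : forall (r : 'I_q) (x : 'rV[R]_p),
        differentiable (fun y => h y theta 0 r) x)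
    (hcont : forall r : 'I_q, continuous (grad (fun y => h y theta 0 r)))
    (b : 'I_q -> \bar R)
    (hb : forall r, b r = ereal_sup
        [set (enorm (grad (fun y => h y theta 0 r) x))%:E | x in [set: 'rV[R]_p]])
    (hbpos : forall r, (0 < b r)%E) (hbfin : forall r, (b r < +oo)%E)
    (c : R) (hc0 : 0 < c) (hc1 : c < 1)
    (B : 'I_q -> set 'rV[R]_p)
    (hB : forall r, B r = [set x | (c%:E * b r <
                     (enorm (grad (fun y => h y theta 0 r) x))%:E)%E])
    (C : R) (hC : (lebesgue_outer (\bigcup_(r in [set: 'I_q]) B r) < C%:E)%E) :
  forall eps : R, 0 < eps ->
  exists P : probability (p.-tuple R) R,
    forall r : 'I_q,
      (ereal_sup [set (enorm (expect_vec P
           (fun eta => grad (fun y => h y theta 0 r) (x + eta))))%:E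
         | x in [set: 'rV[R]_p]] < (c + eps)%:E * b r)%E.
Proof.
move=> eps eps_gt0.
have [_ [lo [hi [cover ->]] volC]] := ereal_inf_lt hC.
have C_gt0 : 0 < C.
  rewrite -lte_fin; apply: le_lt_trans volC.
  by apply: nneseries_ge0 => k _ _; rewrite lee_fin box_vol_ge0.
have w_gt0 : 0 < 1 + 2 * C / eps by rewrite ltr_wpDr // divr_ge0 ?mulr_ge0 ?ltW.
exists (uniform_cube w_gt0 p) => r; set G := grad _.
have [beta Ebr] : exists beta, b r = beta%:E.
  by exists (fine (b r)); rewrite fineK // ge0_fin_numE ?hbfin ?ltW.
have G_le y : enorm (G y) <= beta.
  by rewrite -lee_fin -Ebr hb; apply: ereal_sup_ubound; exists y.
have br_gt0 := hbpos r; rewrite hb in br_gt0.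
have [_ [y _ <-]] := ereal_sup_gt br_gt0.
rewrite lte_fin => /enorm_gt0_dim p_gt0 {y}.
have beta_gt0 : 0 < beta by rewrite -lte_fin -Ebr.
rewrite Ebr -EFinM; apply: (@le_lt_trans _ _ ((c + eps / 2) * beta)%:E).
  apply: ge_ereal_sup => _ [x _ <-]; rewrite lee_fin.
  apply: le_trans (enorm_expect_shift_le w_gt0 (hcont r) G_le (ltW hc0) _
    (ltW volC) x) _.
    move=> y /= bad; apply: cover; exists r => //.
    by rewrite hB /= Ebr -EFinM lte_fin.
  have := cube_mass_le p_gt0 C_gt0 eps_gt0; nra.
by rewrite lte_fin ltr_pM2r // ltrD2l; lra.
Qed.
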